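(* Let $q=2$ and let $d,e$ be integers with $d\ge1$ and $e\ge d+1$. For all $0\le i\le d-1$ and $1\le j\le d$, $$|B_j(i)|>|B_j(i+1)|.$$
   Context: With $q=2$: for integers $m\ge 0$ and $l$, ${m\brack l}=\prod_{t=1}^{l}\frac{q^{m-t+1}-1}{q^t-1}$ for $l\ge0$ and $0$ for $l<0$. For $0\le i,j\le d$, $$B_j(i)=\sum_{h=0}^{\min\{j,d-i\}}(-1)^{j-h}q^{eh+\binom{j-h}{2}}{d-h\brack d-j}{d-i\brack h};$$ these are the eigenvalues of the bilinear forms graph $H_q(d,e,j)$ (vertices: $d\times e$ matrices over $\mathbb F_q$, adjacent iff their difference has rank $j$). *)

From mathcomp Require Import all_boot all_order all_algebra.
Set Implicit Arguments. Unset Strict Implicit. Unset Printing Implicit Defensive.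
Import Order.TTheory GRing.Theory Num.Theory.
Local Open Scope ring_scope.

Definition q : nat := 2.

(* Exponents m-t+1 are taken in int
   so that no truncation occurs (q^(negative) as rat power). *)
Definition gbin (m l : nat) : rat :=
  \prod_(1 <= t < l.+1)
     (((q%:R : rat) ^ ((m%:Z - t%:Z + 1)%R) - 1) / ((q%:R : rat) ^+ t - 1)).

Definition gbinz (m : nat) (l : int) : rat :=
  match l with Posz n => gbin m n | Negz _ => 0 end.

Definition B (d e j i : nat) : rat :=
  \sum_(0 <= h < (minn j (d - i)).+1)
     ((-1) ^+ (j - h)%N * (q%:R) ^+ (e * h + 'C(j - h, 2))%N
       * gbinz (d - h)%N ((d%:Z - j%:Z)%R) * gbin (d - i)%N h).

From mathcomp Require Import all_boot all_order all_algebra.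
From mathcomp Require Import ring lra zify.
Import Order.TTheory GRing.Theory Num.Theory.
Set Implicit Arguments.
Unset Strict Implicit.
Unset Printing Implicit Defensive.
Local Open Scope ring_scope.

(* Write [B d e j] for the eigenvalue sequence of
   H_q(d,e,j) and k = d - j.  The theorem follows from a stronger statement
   proved by induction on d: the signed values
   beta_i = (-1)^(i-k) B_j(i) are positive for i <= d, and strictly
   decreasing in i when j >= 1.
   1. Gaussian binomials: recursion in the lower index, vanishing above the
      top, positivity, shift of the top index and the q-Pascal rule.
   2. The q-Pascal rule yields the recurrence
        B_{d+1,e+1,j+1}(i) - B_{d+1,e+1,j+1}(i+1) = q^(e+1+d-i) B_{d,e,j}(i),
      and the last value B_j(d) is an explicit signed Gaussian binomial.
   3. An abstract lemma on real sequences: if alpha_i = c_i beta_i + alpha_{i+1}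
      below k and alpha_i = c_i beta_i - alpha_{i+1} from k to d, with beta
      positive and decreasing, c_i = 2 c_{i+1}, and a base inequality at d,
      then alpha is positive and strictly decreasing on [0, d+1].
   4. The induction step instantiates 3 with alpha, beta the signed sequences
      for (d+1, e+1, j+1) and (d, e, j); the theorem takes absolute values. *)

Notation Q := (q%:R : rat).

Lemma expQ_gt0 n : 0 < Q ^+ n.
Proof. by rewrite exprn_gt0. Qed.

Lemma expQ_ge1 n : 1 <= Q ^+ n.
Proof. by rewrite exprn_ege1. Qed.

Lemma expQ_gt1 n : (0 < n)%N -> 1 < Q ^+ n.
Proof. by move=> n_gt0; rewrite exprn_egt1 // -lt0n. Qed.

Lemma expQ_subr1_neq0 n : (0 < n)%N -> Q ^+ n - 1 != 0.
Proof. by move=> n_gt0; rewrite subr_eq0 gt_eqF // expQ_gt1. Qed.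

Lemma gbin0 m : gbin m 0 = 1.
Proof. by rewrite /gbin big_geq. Qed.

Lemma gbin_recr m l : gbin m l.+1 =
  gbin m l * ((Q ^ (m%:Z - l.+1%:Z + 1) - 1) / (Q ^+ l.+1 - 1)).
Proof. by rewrite /gbin big_nat_recr. Qed.

Lemma gbinS m l : (l <= m)%N ->
  gbin m l.+1 = gbin m l * ((Q ^+ (m - l) - 1) / (Q ^+ l.+1 - 1)).
Proof.
by move=> le_lm; rewrite gbin_recr (_ : _ + 1 = (m - l)%N :> int) //; lia.
Qed.

(* Above the top index the product contains the factor q^0 - 1 = 0. *)
Lemma gbin_eq0 m l : (m < l)%N -> gbin m l = 0.
Proof.
elim: l => [//|l IHl] lt_ml; rewrite gbin_recr.
have [lt_ml'|gt_ml|->] := ltngtP m l.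
- by rewrite IHl ?mul0r.
- by lia.
- by rewrite (_ : _ + 1 = 0 :> int) ?expr0z ?subrr ?mul0r ?mulr0 //; lia.
Qed.

Lemma gbin_gt0 m l : (l <= m)%N -> 0 < gbin m l.
Proof.
elim: l => [|l IHl] le_lm; first by rewrite gbin0.
rewrite gbinS 1?ltnW // mulr_gt0 ?IHl 1?ltnW //.
by rewrite divr_gt0 // subr_gt0 expQ_gt1 // subn_gt0.
Qed.

Lemma gbinSm m l : (l <= m.+1)%N ->
  gbin m.+1 l * (Q ^+ (m.+1 - l) - 1) = gbin m l * (Q ^+ m.+1 - 1).
Proof.
elim: l => [|l IHl] le_lm; first by rewrite !gbin0 subn0.
rewrite gbinS; last exact: ltnW.
have [lt_lm|gt_lm|->] := ltngtP l m; last first.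
- by rewrite (gbin_eq0 (ltnSn m)) subnn expr0 subrr !mulr0 mul0r.
- by lia.
rewrite gbinS ?subSS; last exact: ltnW.
transitivity (gbin m.+1 l * (Q ^+ (m.+1 - l) - 1)
              * ((Q ^+ (m - l) - 1) / (Q ^+ l.+1 - 1))); first by ring.
by rewrite IHl; [ring | exact: ltnW].
Qed.

Lemma gbinn m : gbin m m = 1.
Proof.
elim: m => [|m IHm]; first by rewrite gbin0.
by rewrite gbinS // mulrA (gbinSm (leqnSn m)) IHm mul1r divff ?expQ_subr1_neq0.
Qed.

Lemma gbin_pascal m l : gbin m.+1 l.+1 = gbin m l.+1 + Q ^+ (m - l) * gbin m l.
Proof.
have [le_lm|lt_ml] := leqP l m; last by rewrite !gbin_eq0 ?mulr0 ?addr0 // ltnW.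
have le_lm1 : (l <= m.+1)%N by exact: leqW.
rewrite (gbinS le_lm1) mulrA (gbinSm le_lm1) (gbinS le_lm).
have -> : Q ^+ m.+1 = Q ^+ (m - l) * Q ^+ l.+1.
  by rewrite -exprD addnS subnK.
by field; rewrite expQ_subr1_neq0.
Qed.

Definition Bterm d e j i h : rat := (-1) ^+ (j - h) * Q ^+ (e * h + 'C(j - h, 2))
   * gbin (d - h) (d - j) * gbin (d - i) h.

(* The summation range of B may be extended to 0 <= h <= d, the new terms
   vanishing by gbin_eq0. *)
Lemma B_sum d e j i : (j <= d)%N -> B d e j i = \sum_(0 <= h < d.+1) Bterm d e j i h.
Proof.
move=> le_jd; rewrite /B subzn //.
rewrite [RHS](@big_cat_nat _ _ _ (minn j (d - i)).+1) //=; last by lia.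
rewrite [X in _ = _ + X]big_nat_cond [X in _ = _ + X]big1 ?addr0 // => h.
rewrite andbT => /andP[lt_min lt_hd]; rewrite /Bterm.
have [le_hj|lt_jh] := leqP h j; first by rewrite (@gbin_eq0 (d - i) h) ?mulr0 //; lia.
by rewrite (@gbin_eq0 (d - h) (d - j)) ?mulr0 ?mul0r //; lia.
Qed.

Lemma B_last d e j : (j <= d)%N ->
  B d e j d = (-1) ^+ j * Q ^+ 'C(j, 2) * gbin d (d - j).
Proof.
by move=> le_jd; rewrite /B subzn // subnn minn0 big_nat1 !subn0 muln0 gbin0 mulr1.
Qed.

Lemma B_j0 d e i : B d e 0 i = 1.
Proof.
by rewrite /B min0n big_nat1 !subn0 muln0 gbin0 subr0 /= gbinn !mulr1.
Qed.

(* The key recurrence, from the q-Pascal rule applied to [d+1-i brack h+1]. *)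
Lemma B_diff d e j i : (j <= d)%N -> (i <= d)%N ->
  B d.+1 e.+1 j.+1 i - B d.+1 e.+1 j.+1 i.+1 = Q ^+ (e.+1 + (d - i)) * B d e j i.
Proof.
move=> le_jd le_id.
rewrite !B_sum // -sumrB big_nat_recl // /Bterm !gbin0 subrr add0r big_distrr.
apply: eq_big_nat => h /andP[_ lt_hd].
rewrite !subSS (subSn le_id) -mulrBr gbin_pascal addrAC subrr add0r.
have [le_hdi|lt_dih] := leqP h (d - i); last by rewrite (gbin_eq0 lt_dih) /= !mulr0.
have exp_eq : (e.+1 * h.+1 + 'C(j - h, 2) + (d - i - h)
             = e.+1 + (d - i) + (e * h + 'C(j - h, 2)))%N.
  by rewrite !mulSn !mulnS; lia.
transitivity ((-1) ^+ (j - h) * Q ^+ (e.+1 * h.+1 + 'C(j - h, 2) + (d - i - h))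
              * gbin (d - h) (d - j) * gbin (d - i) h).
  by rewrite (exprD _ _ (d - i - h)); ring.
by rewrite exp_eq exprD /=; ring.
Qed.

(* Signed eigenvalues: the sign (-1)^(i-(d-j)) makes them positive. *)
Definition signedB d e j i : rat := (-1) ^+ (i - (d - j)) * B d e j i.

Lemma normB_signedB d e j i : `|B d e j i| = `|signedB d e j i|.
Proof. by rewrite normrMsign. Qed.

Lemma signedB_j0 d e i : (i <= d)%N -> signedB d e 0 i = 1.
Proof.
by move=> le_id; rewrite /signedB B_j0 subn0 (eqP le_id) expr0 mulr1.
Qed.

Lemma signedB_last d e j : (j <= d)%N ->
  signedB d e j d = Q ^+ 'C(j, 2) * gbin d (d - j).
Proof.
by move=> le_jd; rewrite /signedB B_last // subKn // !mulrA -expr2 sqrr_sign mul1r.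
Qed.

(* B_diff for the signed values: the next value enters with coefficient +1
   below k = d - j and with coefficient -1 from k on. *)
Lemma signedB_rec d e j i : (j <= d)%N -> (i <= d)%N ->
  signedB d.+1 e.+1 j.+1 i = Q ^+ (e.+1 + (d - i)) * signedB d e j i
    + (-1) ^+ (d - j <= i)%N * signedB d.+1 e.+1 j.+1 i.+1.
Proof.
move=> le_jd le_id; rewrite /signedB subSS.
have -> : B d.+1 e.+1 j.+1 i
          = Q ^+ (e.+1 + (d - i)) * B d e j i + B d.+1 e.+1 j.+1 i.+1.
  by rewrite -B_diff // subrK.
rewrite mulrDr mulrCA; congr (_ + _); rewrite mulrA; congr (_ * _).
have [le_ki|lt_ik] := leqP (d - j) i.
  by rewrite (subSn le_ki) exprS expr1 mulrA mulN1r opprK mul1r.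
have /eqP-> : (i - (d - j) == 0)%N by rewrite subn_eq0 ltnW.
by have /eqP-> : (i.+1 - (d - j) == 0)%N by rewrite subn_eq0.
Qed.

Lemma downward_ind (P : nat -> Prop) lo hi :
  P hi -> (forall i, (lo <= i < hi)%N -> P i.+1 -> P i) ->
  forall i, (lo <= i <= hi)%N -> P i.
Proof.
move=> P_hi P_step i /andP[le_lo_i le_i_hi].
have [n def_hi] : exists n, hi = (i + n)%N by exists (hi - i)%N; lia.
elim: n i def_hi le_lo_i le_i_hi => [|n IHn] i def_hi le_lo_i le_i_hi.
  by rewrite def_hi addn0 in P_hi.
by apply: P_step; [lia | apply: IHn; lia].
Qed.

Section SignedRecurrence.

Variables (R : realFieldType) (alpha beta c : nat -> R) (k d : nat).
Hypothesis c_gt0 : forall i, 0 < c i.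
Hypothesis alpha_rec : forall i, (i <= d)%N ->
  alpha i = c i * beta i + (-1) ^+ (k <= i)%N * alpha i.+1.

(* The invariant is
   0 < alpha_{i+1} < c_i beta_i / 2. *)
Lemma alternating_tail :
  (forall i, (i < d)%N -> c i = 2 * c i.+1) ->
  (forall i, (k <= i < d)%N -> beta i.+1 < beta i) ->
  0 < alpha d.+1 -> 2 * alpha d.+1 < c d * beta d ->
  forall i, (k <= i <= d)%N -> 0 < alpha i.+1 < alpha i.
Proof.
move=> c_halves beta_decr alpha_last_gt0 alpha_last_small.
have alpha_tail i : (k <= i <= d)%N -> alpha i = c i * beta i - alpha i.+1.
  by case/andP=> le_ki le_id; rewrite alpha_rec // le_ki expr1 mulN1r.
have inv : forall i, (k <= i <= d)%N ->
    0 < alpha i.+1 /\ 2 * alpha i.+1 < c i * beta i.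
  apply: downward_ind => // i /andP[le_ki lt_id] [alpha_gt0 alpha_small].
  have cbeta_decr : c i.+1 * beta i.+1 < c i.+1 * beta i.
    by rewrite ltr_pM2l // beta_decr // le_ki.
  rewrite alpha_tail; last by rewrite (leqW le_ki) lt_id.
  by rewrite (c_halves i lt_id) -mulrA; split; lra.
move=> i le_kid; have [alpha_gt0 alpha_small] := inv i le_kid.
by rewrite alpha_gt0 /= (alpha_tail i le_kid); lra.
Qed.

(* Below k the recurrence only adds positive terms. *)
Lemma nonalternating_head :
  (forall i, (i < k)%N -> 0 < beta i) -> (k <= d)%N -> 0 < alpha k ->
  forall i, (i < k)%N -> 0 < alpha i.+1 < alpha i.
Proof.
move=> beta_gt0 le_kd alpha_k_gt0.
have alpha_head i : (i < k)%N -> alpha i = c i * beta i + alpha i.+1.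
  move=> lt_ik; rewrite alpha_rec; last exact: leq_trans (ltnW lt_ik) le_kd.
  by rewrite leqNgt lt_ik expr0 mul1r.
have pos : forall i, (0 <= i <= k)%N -> 0 < alpha i.
  apply: downward_ind => // i /andP[_ lt_ik] alpha_gt0.
  by rewrite alpha_head // addr_gt0 // mulr_gt0 // beta_gt0.
move=> i lt_ik; have alpha_gt0 : 0 < alpha i.+1 by rewrite pos ?lt_ik.
by rewrite alpha_gt0 (alpha_head i lt_ik) ltrDr mulr_gt0 // beta_gt0.
Qed.

Lemma signed_recurrence_decr :
  (forall i, (i < d)%N -> c i = 2 * c i.+1) -> (k <= d)%N ->
  (forall i, (i <= d)%N -> 0 < beta i) ->
  (forall i, (k <= i < d)%N -> beta i.+1 < beta i) ->
  0 < alpha d.+1 -> 2 * alpha d.+1 < c d * beta d ->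
  forall i, (i <= d)%N -> 0 < alpha i.+1 < alpha i.
Proof.
move=> c_halves le_kd beta_gt0 beta_decr alpha_last_gt0 alpha_last_small i le_id.
have tail := alternating_tail c_halves beta_decr alpha_last_gt0 alpha_last_small.
have [le_ki|lt_ik] := leqP k i; first by rewrite tail ?le_ki.
apply: nonalternating_head lt_ik => //.
  by move=> i' lt_i'k; rewrite beta_gt0 // (leq_trans (ltnW lt_i'k)).
have /andP[alpha_k1_gt0 alpha_k_decr] : 0 < alpha k.+1 < alpha k.
  by rewrite tail // leqnn.
exact: lt_trans alpha_k1_gt0 alpha_k_decr.
Qed.

End SignedRecurrence.

(* The base case of the alternating recurrence in the induction step:
   2 q^C(j+1,2) [d+1 brack d-j] < q^(e+1) q^C(j,2) [d brack d-j] when d < e. *)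
Lemma last_values_ineq d e j : (d < e)%N -> (j <= d)%N ->
  2 * (Q ^+ 'C(j.+1, 2) * gbin d.+1 (d - j))
  < Q ^+ e.+1 * (Q ^+ 'C(j, 2) * gbin d (d - j)).
Proof.
move=> lt_de le_jd.
rewrite binS bin1 exprD.
set C := Q ^+ 'C(j, 2); set W := Q ^+ j; set X := Q ^+ d.+1; set Z := Q ^+ e.+1.
have W_ge1 : 1 <= W by exact: expQ_ge1.
have X_gt0 : 0 < X by exact: expQ_gt0.
have CG_gt0 : 0 < C * gbin d (d - j) by rewrite mulr_gt0 ?expQ_gt0 ?gbin_gt0 ?leq_subr.
have top_shift : gbin d.+1 (d - j) * (2 * W - 1) = gbin d (d - j) * (X - 1).
  rewrite -gbinSm; last exact: leqW (leq_subr j d).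
  by rewrite subSn ?leq_subr // subKn // exprS.
have e_large : 2 * X <= Z by rewrite (_ : 2 * X = Q ^+ d.+2) // ler_weXn2l.
have core : 2 * W * (X - 1) < Z * (2 * W - 1).
  have : 2 * X * (2 * W - 1) <= Z * (2 * W - 1) by rewrite ler_wpM2r //; lra.
  nra.
clearbody C W X Z.
rewrite -(ltr_pM2r (_ : 0 < 2 * W - 1)); last lra.
have -> : 2 * (C * W * gbin d.+1 (d - j)) * (2 * W - 1)
          = C * gbin d (d - j) * (2 * W * (X - 1)).
  transitivity (C * (2 * W) * (gbin d.+1 (d - j) * (2 * W - 1))); first by ring.
  by rewrite top_shift; ring.
have -> : Z * (C * gbin d (d - j)) * (2 * W - 1)
          = C * gbin d (d - j) * (Z * (2 * W - 1)) by ring.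
by rewrite ltr_pM2l.
Qed.

(* Induction step: positivity and monotonicity of the signed values for
   (d, e, j) give positivity and strict monotonicity for (d+1, e+1, j+1), by
   signed_recurrence_decr with k = d - j and c_i = q^(e+1+d-i). *)
Lemma signedB_step d e j : (d < e)%N -> (j <= d)%N ->
  (forall i, (i <= d)%N -> 0 < signedB d e j i) ->
  ((0 < j)%N -> forall i, (i < d)%N -> signedB d e j i.+1 < signedB d e j i) ->
  forall i, (i <= d)%N ->
    0 < signedB d.+1 e.+1 j.+1 i.+1 < signedB d.+1 e.+1 j.+1 i.
Proof.
move=> lt_de le_jd beta_gt0 beta_decr.
have last_pos : 0 < signedB d.+1 e.+1 j.+1 d.+1.
  by rewrite signedB_last ?ltnS // mulr_gt0 ?expQ_gt0 ?gbin_gt0 ?leq_subr.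
have last_small : 2 * signedB d.+1 e.+1 j.+1 d.+1
                  < Q ^+ (e.+1 + (d - d)) * signedB d e j d.
  by rewrite !signedB_last // subSS subnn addn0 last_values_ineq.
apply: (@signed_recurrence_decr _ (signedB d.+1 e.+1 j.+1) (signedB d e j)
          (fun i => Q ^+ (e.+1 + (d - i))) (d - j))
  => //= [i|i|i lt_id||i /andP[le_ki lt_id]].
- exact: expQ_gt0.
- exact: signedB_rec.
- by rewrite (_ : e.+1 + (d - i) = (e.+1 + (d - i.+1)).+1)%N ?exprS //; lia.
- exact: leq_subr.
- by apply: beta_decr; lia.
Qed.

Lemma signedB_pos_decr d e j : (d < e)%N -> (j <= d)%N ->
  (forall i, (i <= d)%N -> 0 < signedB d e j i) /\
  ((0 < j)%N -> forall i, (i < d)%N -> signedB d e j i.+1 < signedB d e j i).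
Proof.
elim: d e j => [|d IHd] e [|j] lt_de le_jd //.
- by split=> // i le_id; rewrite signedB_j0.
- by split=> // i le_id; rewrite signedB_j0.
case: e lt_de => // e lt_de.
have [beta_gt0 beta_decr] := IHd e j lt_de le_jd.
have step := @signedB_step d e j lt_de le_jd beta_gt0 beta_decr.
split=> [i|_ i lt_id]; last by case/andP: (step i lt_id).
rewrite leq_eqVlt => /orP[/eqP->|lt_id]; first by case/andP: (step d (leqnn d)).
by case/andP: (step i lt_id) => /lt_trans; apply.
Qed.

Theorem theorem4p6 (d e : nat) :
  (1 <= d)%N -> (d.+1 <= e)%N ->
  forall i j : nat, (i <= d - 1)%N -> (1 <= j <= d)%N ->
  `| B d e j i | > `| B d e j i.+1 |.
Proof.
move=> le1d lt_de i j le_i /andP[j_gt0 le_jd].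
have lt_id : (i < d)%N by lia.
have [signedB_gt0 signedB_decr] := signedB_pos_decr lt_de le_jd.
rewrite !normB_signedB !gtr0_norm ?signedB_gt0 // ?(ltnW lt_id) //.
exact: signedB_decr.
Qed.
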